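(* Let $N\ge1$, $\Delta w>0$, $\Delta t>0$. For $i=0,\dots,N-1$ let $D_{i+1/2}>0$ and $\tilde{\mathcal C}^n_{i+1/2}\in\mathbb R$ be given (in applications computed from $f^n$), and set $\lambda^n_{i+1/2}=\Delta w\,\tilde{\mathcal C}^n_{i+1/2}/D_{i+1/2}$, $\delta^n_{i+1/2}=\frac{1}{\lambda^n_{i+1/2}}+\frac{1}{1-e^{\lambda^n_{i+1/2}}}$ (with $\delta^n_{i+1/2}=1/2$ if $\lambda^n_{i+1/2}=0$). Consider the semi-implicit scheme $$f_i^{n+1}=f_i^n+\Delta t\,\frac{\hat{\mathcal F}^{n+1}_{i+1/2}-\hat{\mathcal F}^{n+1}_{i-1/2}}{\Delta w},\quad i=0,\dots,N,$$ with $\hat{\mathcal F}^{n+1}_{-1/2}=\hat{\mathcal F}^{n+1}_{N+1/2}=0$ and, for $i=0,\dots,N-1$, $$\hat{\mathcal F}^{n+1}_{i+1/2}=\tilde{\mathcal C}^n_{i+1/2}\big[(1-\delta^n_{i+1/2})f^{n+1}_{i+1}+\delta^n_{i+1/2}f^{n+1}_i\big]+D_{i+1/2}\frac{f^{n+1}_{i+1}-f^{n+1}_i}{\Delta w}.$$ Let $M=\max_i|\tilde{\mathcal C}^n_{i+1/2}|$. If $\Delta t<\frac{\Delta w}{2M}$, then this linear system for $(f_0^{n+1},\dots,f_N^{n+1})$ has a unique solution, and $f_i^n\ge0$ for all $i$ implies $f_i^{n+1}\ge0$ for all $i=0,\dots,N$.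
   Context: Chang–Cooper type (SP-CC) discretization of the 1D Fokker–Planck equation $\partial_t f=\partial_w[(\mathcal B[f]+D')f+D\partial_w f]$ on a uniform grid with no-flux boundary conditions; the drift coefficients and weights are frozen at time level $n$ while $f$ is taken at level $n+1$. *)

From Stdlib Require Import Reals List Arith.
Open Scope R_scope.

(* Grid values are functions nat -> R; only indices 0..N matter for f,
   and 0..N-1 for the half-point quantities (index i stands for i+1/2). *)

Definition cc_lambda (dw : R) (C D : nat -> R) (i : nat) : R :=
  dw * C i / D i.

Definition cc_delta (dw : R) (C D : nat -> R) (i : nat) : R :=
  let l := cc_lambda dw C D i in
  if Req_EM_T l 0 then / 2 else / l + / (1 - exp l).

Definition cc_flux (N : nat) (dw : R) (C D : nat -> R) (g : nat -> R)
    (i : nat) : R :=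
  if Nat.ltb i N then
    C i * ((1 - cc_delta dw C D i) * g (S i) + cc_delta dw C D i * g i)
    + D i * (g (S i) - g i) / dw
  else 0.

Definition cc_flux_left (N : nat) (dw : R) (C D : nat -> R) (g : nat -> R)
    (i : nat) : R :=
  match i with
  | O => 0
  | S j => cc_flux N dw C D g j
  end.

Definition cc_scheme (N : nat) (dw dt : R) (C D f g : nat -> R) : Prop :=
  forall i : nat, (i <= N)%nat ->
    g i = f i + dt * (cc_flux N dw C D g i - cc_flux_left N dw C D g i) / dw.

Definition cc_Cmax (N : nat) (C : nat -> R) : R :=
  fold_right Rmax 0 (map (fun i => Rabs (C i)) (seq 0 N)).

From Stdlib Require Import Reals Lra Lia Psatz.
Open Scope R_scope.

(* With the Chang–Cooper weight the numerical flux is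
   F_{i+1/2} = a_i g_{i+1} - b_i g_i with a_i = D_i/dw * l e^l/(e^l - 1) and
   b_i = D_i/dw * l/(e^l - 1) (l = lambda_{i+1/2}), both positive.
   Positivity: let chi be the indicator of {g < 0}. Summation by parts gives
   sum_i chi_i (g_i - f_i) = dt/dw * sum_i F_{i+1/2} (chi_i - chi_{i+1}) >= 0,
   each term being >= 0 by the sign of the flux across a sign change of g;
   hence sum_{g_i < 0} (- g_i) <= sum_{g_i < 0} (f_i - g_i) <= 0.
   Uniqueness: the difference of two solutions solves the scheme with f = 0,
   so it is both nonnegative and nonpositive.
   Existence: summing the scheme, it amounts to
   g_0 + ... + g_k = f_0 + ... + f_k + dt/dw * F_{k+1/2} for k <= N, which
   determines g_{k+1} from g_0, ..., g_k; the solution is affine in g_0, and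
   the mass of the homogeneous shot from g_0 = 1 is positive, so the last
   equation (F_{N+1/2} = 0) fixes g_0. *)

Lemma sum_f_R0_nonneg (h : nat -> R) (n : nat) :
  (forall i, (i <= n)%nat -> 0 <= h i) -> 0 <= sum_f_R0 h n.
Proof.
  intro Hh; induction n as [|n IHn]; simpl.
  - apply Hh; lia.
  - pose proof (Hh (S n) (le_n _)).
    assert (0 <= sum_f_R0 h n) by (apply IHn; intros; apply Hh; lia); lra.
Qed.

Lemma sum_f_R0_ge_term (h : nat -> R) (n j : nat) :
  (forall i, (i <= n)%nat -> 0 <= h i) -> (j <= n)%nat -> h j <= sum_f_R0 h n.
Proof.
  intros Hh Hj; induction n as [|n IHn]; simpl.
  - replace j with O by lia; lra.
  - assert (Hh' : forall i, (i <= n)%nat -> 0 <= h i) by (intros; apply Hh; lia).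
    pose proof (sum_f_R0_nonneg h n Hh'); pose proof (Hh (S n) (le_n _)).
    destruct (Nat.eq_dec j (S n)) as [->|Hne]; [lra|].
    assert (h j <= sum_f_R0 h n) by (apply IHn; [exact Hh' | lia]); lra.
Qed.

Definition prev (F : nat -> R) (i : nat) : R :=
  match i with O => 0 | S j => F j end.

Lemma sum_by_parts (u F : nat -> R) (k : nat) :
  sum_f_R0 (fun i => u i * (F i - prev F i)) k
  = sum_f_R0 (fun i => F i * (u i - u (S i))) k + u (S k) * F k.
Proof. induction k as [|k IHk]; simpl in *; [|rewrite IHk]; ring. Qed.

Lemma exp_ratio_pos (x : R) : x <> 0 -> 0 < x / (exp x - 1).
Proof.
  intro Hx; destruct (Rlt_or_le 0 x) as [Hpos|Hneg].
  - assert (1 < exp x) by (rewrite <- exp_0; apply exp_increasing; lra).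
    apply Rdiv_lt_0_compat; lra.
  - assert (exp x < 1) by (rewrite <- exp_0; apply exp_increasing; lra).
    replace (x / (exp x - 1)) with (- x / (1 - exp x)) by (field; lra).
    apply Rdiv_lt_0_compat; lra.
Qed.

Section ChangCooper.

Variables (N : nat) (dw dt : R) (C D : nat -> R).
Hypothesis hdw : 0 < dw.
Hypothesis hdt : 0 < dt.
Hypothesis hD : forall i : nat, (i < N)%nat -> 0 < D i.

Definition flux_coef_next (i : nat) : R :=
  C i * (1 - cc_delta dw C D i) + D i / dw.

Definition flux_coef_cur (i : nat) : R :=
  D i / dw - C i * cc_delta dw C D i.

Lemma cc_flux_affine (g : nat -> R) (i : nat) : (i < N)%nat ->
  cc_flux N dw C D g i = flux_coef_next i * g (S i) - flux_coef_cur i * g i.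
Proof.
  intro Hi; unfold cc_flux, flux_coef_next, flux_coef_cur.
  rewrite (proj2 (Nat.ltb_lt i N) Hi); unfold Rdiv; ring.
Qed.

Lemma cc_flux_last (g : nat -> R) : cc_flux N dw C D g N = 0.
Proof. unfold cc_flux; now rewrite Nat.ltb_irrefl. Qed.

Lemma flux_coef_pos (i : nat) : (i < N)%nat ->
  0 < flux_coef_next i /\ 0 < flux_coef_cur i.
Proof.
  intro Hi; pose proof (hD i Hi) as HDi.
  assert (HDdw : 0 < D i / dw) by (apply Rdiv_lt_0_compat; lra).
  unfold flux_coef_next, flux_coef_cur, cc_delta; cbv zeta.
  destruct (Req_EM_T (cc_lambda dw C D i) 0) as [Hl|Hl].
  - assert (HC : C i = 0).
    { unfold cc_lambda in Hl.
      replace (C i) with (dw * C i / D i * (D i / dw)) by (field; split; lra).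
      rewrite Hl; ring. }
    rewrite HC; lra.
  - set (l := cc_lambda dw C D i) in *.
    assert (HC : C i = D i / dw * l) by (subst l; unfold cc_lambda; field; split; lra).
    pose proof (exp_ratio_pos l Hl) as Hr.
    assert (He : exp l <> 1).
    { intro E; rewrite E, Rminus_diag in Hr; unfold Rdiv in Hr.
      rewrite Rinv_0, Rmult_0_r in Hr; lra. }
    rewrite HC; split.
    + replace (D i / dw * l * (1 - (/ l + / (1 - exp l))) + D i / dw)
        with (D i / dw * (exp l * (l / (exp l - 1))))
        by (field; repeat split; lra).
      pose proof (exp_pos l); apply Rmult_lt_0_compat; nra.
    + replace (D i / dw - D i / dw * l * (/ l + / (1 - exp l)))
        with (D i / dw * (l / (exp l - 1))) by (field; repeat split; lra).
      now apply Rmult_lt_0_compat.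
Qed.

Lemma scheme_nonneg (f g : nat -> R) :
  (forall i, (i <= N)%nat -> 0 <= f i) ->
  cc_scheme N dw dt C D f g -> forall i, (i <= N)%nat -> 0 <= g i.
Proof.
  intros Hf Hg.
  set (chi := fun i => if Rlt_dec (g i) 0 then 1 else 0).
  set (F := cc_flux N dw C D g).
  assert (Hjump : forall i, (i <= N)%nat -> 0 <= F i * (chi i - chi (S i))).
  { intros i Hi; destruct (Nat.eq_dec i N) as [->|Hne].
    - unfold F; rewrite cc_flux_last; lra.
    - unfold F; rewrite cc_flux_affine by lia.
      destruct (flux_coef_pos i ltac:(lia)).
      unfold chi; destruct (Rlt_dec (g i) 0), (Rlt_dec (g (S i)) 0); nra. }
  assert (Hdissip : 0 <= sum_f_R0 (fun i => chi i * (F i - prev F i)) N).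
  { rewrite sum_by_parts; unfold F; rewrite cc_flux_last, Rmult_0_r, Rplus_0_r.
    now apply sum_f_R0_nonneg. }
  assert (Hbalance : sum_f_R0 (fun i => chi i * (f i - g i)) N
                     = - (dt / dw) * sum_f_R0 (fun i => chi i * (F i - prev F i)) N).
  { rewrite scal_sum; apply sum_eq; intros i Hi.
    rewrite (Hg i Hi); unfold F; destruct i; simpl; field; lra. }
  assert (Hnegpart : sum_f_R0 (fun i => chi i * - g i) N
                     <= sum_f_R0 (fun i => chi i * (f i - g i)) N).
  { apply sum_Rle; intros i Hi; pose proof (Hf i Hi).
    unfold chi; destruct (Rlt_dec (g i) 0); lra. }
  assert (0 <= dt / dw) by (apply Rlt_le, Rdiv_lt_0_compat; lra).
  intros j Hj.
  assert (Hterm : chi j * - g j <= sum_f_R0 (fun i => chi i * - g i) N).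
  { apply (sum_f_R0_ge_term (fun i => chi i * - g i)); [|exact Hj].
    intros i _; unfold chi; destruct (Rlt_dec (g i) 0); lra. }
  unfold chi in Hterm at 1; destruct (Rlt_dec (g j) 0); nra.
Qed.

Lemma cc_flux_sub (g h : nat -> R) (i : nat) :
  cc_flux N dw C D (fun k => h k - g k) i = cc_flux N dw C D h i - cc_flux N dw C D g i.
Proof. unfold cc_flux; destruct (Nat.ltb i N); unfold Rdiv; ring. Qed.

Lemma scheme_sub (f g h : nat -> R) :
  cc_scheme N dw dt C D f g -> cc_scheme N dw dt C D f h ->
  cc_scheme N dw dt C D (fun _ => 0) (fun i => h i - g i).
Proof.
  intros Hg Hh i Hi; rewrite (Hg i Hi), (Hh i Hi).
  unfold cc_flux_left; destruct i; rewrite !cc_flux_sub; unfold Rdiv; ring.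
Qed.

Lemma scheme_unique (f g h : nat -> R) :
  cc_scheme N dw dt C D f g -> cc_scheme N dw dt C D f h ->
  forall i, (i <= N)%nat -> h i = g i.
Proof.
  intros Hg Hh i Hi.
  assert (Hzero : forall k, (k <= N)%nat -> 0 <= (fun _ : nat => 0) k) by (intros; lra).
  pose proof (scheme_nonneg _ _ Hzero (scheme_sub f g h Hg Hh) i Hi).
  pose proof (scheme_nonneg _ _ Hzero (scheme_sub f h g Hh Hg) i Hi).
  simpl in *; lra.
Qed.

Lemma scheme_of_partial_sums (f g : nat -> R) :
  (forall k, (k <= N)%nat ->
     sum_f_R0 g k = sum_f_R0 f k + dt / dw * cc_flux N dw C D g k) ->
  cc_scheme N dw dt C D f g.
Proof.
  intros Hsum [|j] Hj.
  - pose proof (Hsum O Hj) as H0; simpl in *; rewrite H0; field; lra.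
  - pose proof (Hsum (S j) Hj) as HS; pose proof (Hsum j ltac:(lia)) as Hj'.
    simpl in *; replace (g (S j)) with (sum_f_R0 g j + g (S j) - sum_f_R0 g j) by ring.
    rewrite HS, Hj'; field; lra.
Qed.

(* [shoot Phi t k = (g_k, g_0 + ... + g_k)] for the sequence starting at
   [g_0 = t] and solving [g_0 + ... + g_k = Phi k + dt/dw * F_{k+1/2}]
   for [g_{k+1}]. *)
Fixpoint shoot (Phi : nat -> R) (t : R) (k : nat) : R * R :=
  match k with
  | O => (t, t)
  | S k =>
      let p := shoot Phi t k in
      let y := (flux_coef_cur k * fst p + dw / dt * (snd p - Phi k))
               / flux_coef_next k in
      (y, snd p + y)
  end.

Lemma shoot_affine (Phi : nat -> R) (t : R) (k : nat) :
  shoot Phi t k =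
  (fst (shoot Phi 0 k) + t * fst (shoot (fun _ => 0) 1 k),
   snd (shoot Phi 0 k) + t * snd (shoot (fun _ => 0) 1 k)).
Proof.
  induction k as [|k IHk]; simpl; [f_equal; ring|].
  rewrite IHk; simpl; unfold Rdiv; f_equal; ring.
Qed.

Lemma shoot_homogeneous_pos (k : nat) : (k <= N)%nat ->
  0 < fst (shoot (fun _ => 0) 1 k) /\ 0 < snd (shoot (fun _ => 0) 1 k).
Proof.
  induction k as [|k IHk]; intro Hk; simpl; [lra|].
  destruct (IHk ltac:(lia)) as [Hy HY].
  destruct (flux_coef_pos k ltac:(lia)) as [Hnext Hcur].
  assert (0 < dw / dt) by (apply Rdiv_lt_0_compat; lra).
  assert (0 < (flux_coef_cur k * fst (shoot (fun _ => 0) 1 k)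
               + dw / dt * (snd (shoot (fun _ => 0) 1 k) - 0)) / flux_coef_next k).
  { apply Rdiv_lt_0_compat; nra. }
  lra.
Qed.

Lemma scheme_exists (f : nat -> R) : exists g, cc_scheme N dw dt C D f g.
Proof.
  set (Q := snd (shoot (fun _ => 0) 1 N)).
  assert (HQ : 0 < Q) by (apply shoot_homogeneous_pos; lia).
  set (t := (sum_f_R0 f N - snd (shoot (sum_f_R0 f) 0 N)) / Q).
  set (g := fun k => fst (shoot (sum_f_R0 f) t k)).
  assert (Hmass : forall k, sum_f_R0 g k = snd (shoot (sum_f_R0 f) t k)).
  { induction k as [|k IHk]; [reflexivity|]; simpl; now rewrite IHk. }
  exists g; apply scheme_of_partial_sums; intros k Hk; rewrite Hmass.
  destruct (Nat.eq_dec k N) as [->|Hne].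
  - rewrite cc_flux_last, shoot_affine; simpl; fold Q; unfold t; field; lra.
  - destruct (flux_coef_pos k ltac:(lia)) as [Hnext _].
    rewrite cc_flux_affine by lia; unfold g; simpl; field; lra.
Qed.

End ChangCooper.

Theorem mainTheorem4 (N : nat) (dw dt : R) (C D f : nat -> R)
  (hN : (1 <= N)%nat) (hdw : 0 < dw) (hdt : 0 < dt)
  (hD : forall i : nat, (i < N)%nat -> 0 < D i)
  (hCFL : dt * (2 * cc_Cmax N C) < dw) :
  (exists g : nat -> R, cc_scheme N dw dt C D f g /\
     forall h : nat -> R, cc_scheme N dw dt C D f h ->
       forall i : nat, (i <= N)%nat -> h i = g i)
  /\
  ((forall i : nat, (i <= N)%nat -> 0 <= f i) ->
     forall g : nat -> R, cc_scheme N dw dt C D f g ->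
       forall i : nat, (i <= N)%nat -> 0 <= g i).
Proof.
  split.
  - destruct (scheme_exists N dw dt C D hdw hdt hD f) as [g Hg].
    exists g; split; [exact Hg|].
    intros h Hh; exact (scheme_unique N dw dt C D hdw hdt hD f g h Hg Hh).
  - intros Hf g; exact (scheme_nonneg N dw dt C D hdw hdt hD f g Hf).
Qed.
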